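(* Let $n\ge 2$ and let $P=[p_1,\ldots,p_n]$ be an arithmetically progressed permutation with ratio $k$ such that $p_1\notin\{1,k+1,n\}$. Then the associated ternary string $\mathsf{T}_P$ is the unique string of length $n$ over $\{\mathtt{a},\mathtt{b},\mathtt{c}\}$ whose suffix array is $P$.
   Context: Alphabet $\{\mathtt{a}<\mathtt{b}<\mathtt{c}\}$, lexicographic order with a proper prefix smaller than the longer string; suffix array $\mathsf{SA}_{\mathsf{T}}$: permutation of $[1..n]$ such that $\mathsf{T}[\mathsf{SA}_{\mathsf{T}}[i]..n]$ is the $i$-th smallest suffix. $x\bmod n$ denotes the representative of $x$ modulo $n$ in $[1..n]$. An arithmetically progressed permutation of length $n$ with ratio $k\in[1..n-1]$ is a permutation $P=[p_1,\ldots,p_n]$ of $[1..n]$ with $p_{i+1}=p_i+k\bmod n$. Ternary string associated with $P$: cut $P$ immediately after the entry $n-k$ and immediately after the entry $(p_1-k-1)\bmod n$, giving consecutive possibly empty blocks $A,B,C$ with $P=ABC$; set $\mathsf{T}_P[p_i]=\mathtt{a},\mathtt{b},\mathtt{c}$ according as $p_i$ lies in $A$, $B$, $C$. *)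

From mathcomp Require Import all_boot.
Set Implicit Arguments. Unset Strict Implicit. Unset Printing Implicit Defensive.

(* Letters a < b < c, encoded as 'I_3 = {0,1,2} with the natural order. *)
Definition la : 'I_3 := @Ordinal 3 0 isT.
Definition lb : 'I_3 := @Ordinal 3 1 isT.
Definition lc : 'I_3 := @Ordinal 3 2 isT.

Definition mod1 (n x : nat) : nat := if x %% n == 0 then n else x %% n.

Fixpoint lex_lt (s t : seq 'I_3) : bool :=
  match s, t with
  | [::], [::] => false
  | [::], _ :: _ => true
  | _ :: _, [::] => false
  | x :: s', y :: t' => (x < y) || ((x == y) && lex_lt s' t')
  end.

(* T[i..n] for a 1-based position i *)
Definition suff_at (T : seq 'I_3) (i : nat) : seq 'I_3 := drop i.-1 T.

Definition is_suffix_array (T : seq 'I_3) (P : seq nat) : Prop :=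
  perm_eq P (iota 1 (size T)) /\
  sorted (fun i j => lex_lt (suff_at T i) (suff_at T j)) P.

(* Arithmetically progressed permutation of length n with ratio k
   (p_{i+1} = p_i + k mod n, indices 0-based here). *)
Definition is_APP (n k : nat) (P : seq nat) : Prop :=
  [/\ perm_eq P (iota 1 n), 1 <= k <= n.-1 &
      forall i, i.+1 < n -> nth 0 P i.+1 = mod1 n (nth 0 P i + k)].

(* The ternary string associated with P: cut P immediately after the entry
   n-k and immediately after the entry (p_1 - k - 1) mod n (computed as
   (p_1 + n - k - 1) mod n), giving P = A B C. *)
Definition ternary_of (n k : nat) (P : seq nat) : seq 'I_3 :=
  let i1 := index (n - k) P in
  let i2 := index (mod1 n (head 0 P + n - k.+1)) P in
  let c1 := (minn i1 i2).+1 in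
  let c2 := (maxn i1 i2).+1 in
  let A := take c1 P in
  let B := drop c1 (take c2 P) in
  mkseq (fun j => if j.+1 \in A then la else if j.+1 \in B then lb else lc) n.

From mathcomp Require Import all_boot.
From mathcomp Require Import zify.

Set Implicit Arguments.
Unset Strict Implicit.
Unset Printing Implicit Defensive.

(* Along P the letter
   of T_P at position p_j is  [c1 < j] + [c2 < j],  where c1, c2 are the
   (sorted) indices of the two cut entries n-k and q = (h-k-1) mod n.

   A general criterion: P is the suffix array of T as soon as
   for every two consecutive entries a = p_j, b = p_(j+1) either T[a] < T[b],
   or T[a] = T[b] and either a = |T| or a+1, b+1 are again consecutive in P
   (induction on |T| - a).  For an APP this holds away from the cuts since
   a+1 is followed by b+1 = (a+1) + k mod n in P.

   If S has suffix array P, its letters are nondecreasing along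
   P; they must strictly increase at the cut n-k (followed by n, whose suffix
   of length 1 cannot be beaten) and at the cut q (followed by h-1, where
   equality would compare the suffixes of p_n = q+1 and p_1 = h the wrong
   way).  With three letters, two distinct strict increases force the
   letters along P, hence S = T_P.  The hypothesis h <> 1, k+1, n makes the
   two cuts distinct and not at the end of P. *)

Lemma lex_cons (x : 'I_3) s t : lex_lt (x :: s) (x :: t) = lex_lt s t.
Proof. by rewrite /= ltnn eqxx. Qed.

Lemma lex_lt_head (x y : 'I_3) s t : x < y -> lex_lt (x :: s) (y :: t).
Proof. by move=> xy; rewrite /= xy. Qed.

Lemma lex_head_le (x y : 'I_3) s t : lex_lt (x :: s) (y :: t) -> x <= y.
Proof. by case/orP=> [/ltnW //|/andP[/eqP-> _]]. Qed.

Lemma lex_nil_r s : lex_lt s [::] = false.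
Proof. by case: s. Qed.

Lemma lex_nil_l t : lex_lt [::] t = (t != [::]).
Proof. by case: t. Qed.

Lemma lex_trans : transitive lex_lt.
Proof.
move=> t s; elim: s t => [|x s IH] [|y t] [|z u] //=.
case/orP=> [xy|/andP[/eqP-> st]]; case/orP=> [yz|/andP[/eqP<- tu]].
- by rewrite (ltn_trans xy yz).
- by rewrite xy.
- by rewrite yz.
- by rewrite eqxx (IH _ _ st tu) orbT.
Qed.

Lemma lex_irr s : lex_lt s s = false.
Proof. by elim: s => //= x s ->; rewrite ltnn eqxx. Qed.

Lemma lex_asym s t : lex_lt s t -> lex_lt t s = false.
Proof. by move=> st; apply/negbTE/negP=> ts; have := lex_trans st ts; rewrite lex_irr. Qed.

Definition letter (T : seq 'I_3) (x : nat) : 'I_3 := nth la T x.-1.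

Definition suffix_lt (T : seq 'I_3) (i j : nat) : bool :=
  lex_lt (suff_at T i) (suff_at T j).

Lemma suff_cons T x : 1 <= x <= size T -> suff_at T x = letter T x :: suff_at T x.+1.
Proof. by move=> /andP[x1 xT]; rewrite /suff_at (drop_nth la) ?prednK //; lia. Qed.

Lemma suff_past_end T : suff_at T (size T).+1 = [::].
Proof. exact: drop_size. Qed.

Lemma suffix_lt_trans T : transitive (suffix_lt T).
Proof. by move=> y x z; apply: lex_trans. Qed.

Section PermutationsOfRange.

Variables (N : nat) (P : seq nat).
Hypothesis P_perm : perm_eq P (iota 1 N).

Lemma perm_size_eq : size P = N.
Proof. by rewrite (perm_size P_perm) size_iota. Qed.

Lemma perm_entry j : j < N -> 1 <= nth 0 P j <= N.
Proof.
move=> jN; have : nth 0 P j \in P by rewrite mem_nth ?perm_size_eq.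
by rewrite (perm_mem P_perm) mem_iota; lia.
Qed.

Lemma perm_index x : 1 <= x <= N -> index x P < N /\ nth 0 P (index x P) = x.
Proof.
move=> xN; have xP : x \in P by rewrite (perm_mem P_perm) mem_iota; lia.
by rewrite -perm_size_eq index_mem nth_index.
Qed.

Lemma perm_index_nth j : j < N -> index (nth 0 P j) P = j.
Proof.
by move=> jN; rewrite index_uniq ?perm_size_eq ?(perm_uniq P_perm) ?iota_uniq.
Qed.

End PermutationsOfRange.

Section SuffixArrays.

Variables (T : seq 'I_3) (P : seq nat).
Hypothesis P_perm : perm_eq P (iota 1 (size T)).

Lemma eq_from_letters S :
  size S = size T -> (forall j, j < size T -> letter S (nth 0 P j) = letter T (nth 0 P j)) ->
  S = T.
Proof.
move=> szS agree; apply: (eq_from_nth (x0 := la)) => [//|i]; rewrite szS => iT.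
have [jT ej] := perm_index P_perm (x := i.+1) (ltac:(lia)).
by have := agree _ jT; rewrite ej.
Qed.

Lemma sorted_of_steps :
  (forall j, j.+1 < size T ->
     let a := nth 0 P j in let b := nth 0 P j.+1 in
     letter T a < letter T b \/
     letter T a = letter T b /\
     (a = size T \/ exists2 j', j'.+1 < size T &
                                nth 0 P j' = a.+1 /\ nth 0 P j'.+1 = b.+1)) ->
  sorted (suffix_lt T) P.
Proof.
move=> step; apply/(sortedP 0) => j; rewrite (perm_size_eq P_perm) => jT.
move: {2}(size T - nth 0 P j).+1 (ltnSn (size T - nth 0 P j)) => m.
elim: m j jT => [//|m IH] j jT bound.
have aT := perm_entry P_perm (ltnW jT); have bT := perm_entry P_perm jT.
rewrite /suffix_lt (suff_cons aT) (suff_cons bT).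
case: (step j jT) => [lt|[eqab [atop|[j' j'T [ea eb]]]]]; first exact: lex_lt_head.
- have ab : nth 0 P j != nth 0 P j.+1.
    by rewrite nth_uniq ?(perm_size_eq P_perm) ?(perm_uniq P_perm) ?iota_uniq //; lia.
  rewrite eqab lex_cons atop suff_past_end lex_nil_l /suff_at.
  by rewrite -(size_eq0 (drop _ _)) size_drop /=; lia.
- have := perm_entry P_perm (ltnW j'T); rewrite ea => a'T.
  by rewrite eqab lex_cons -ea -eb; apply: IH; lia.
Qed.

Hypothesis P_sorted : sorted (suffix_lt T) P.

Lemma sorted_suffix_lt i j : i < j -> j < size T ->
  suffix_lt T (nth 0 P i) (nth 0 P j).
Proof.
move=> ij jT; apply: (sorted_ltn_nth (@suffix_lt_trans T)) => //;
by rewrite inE (perm_size_eq P_perm); lia.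
Qed.

Lemma sorted_letter_mono i j : i <= j -> j < size T ->
  letter T (nth 0 P i) <= letter T (nth 0 P j).
Proof.
rewrite leq_eqVlt => /predU1P[-> //|ij] jT.
have := sorted_suffix_lt ij jT; rewrite /suffix_lt.
rewrite (suff_cons (perm_entry P_perm (ltn_trans ij jT))) (suff_cons (perm_entry P_perm jT)).
exact: lex_head_le.
Qed.

Lemma sorted_tail_lt j : j.+1 < size T ->
  letter T (nth 0 P j) = letter T (nth 0 P j.+1) ->
  suffix_lt T (nth 0 P j).+1 (nth 0 P j.+1).+1.
Proof.
move=> jT eqab; have := sorted_suffix_lt (ltnSn j) jT; rewrite /suffix_lt.
rewrite (suff_cons (perm_entry P_perm (ltnW jT))) (suff_cons (perm_entry P_perm jT)).
by rewrite eqab lex_cons.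
Qed.

End SuffixArrays.

Definition level (c1 c2 j : nat) : nat := (minn c1 c2 < j) + (maxn c1 c2 < j).

Lemma level_shape (f : nat -> nat) (n c1 c2 : nat) :
  c1 != c2 -> c1.+1 < n -> c2.+1 < n ->
  (forall i j, i <= j -> j < n -> f i <= f j) -> (forall j, f j <= 2) ->
  f c1 < f c1.+1 -> f c2 < f c2.+1 ->
  forall j, j < n -> f j = level c1 c2 j.
Proof.
wlog c12 : c1 c2 / c1 < c2 => [wlog|_ _ c2n mono le2 up1 up2 j jn].
  move=> ne; case: (ltngtP c1 c2) (ne) => [lt _|gt _|-> /eqP//]; first exact: wlog.
  by rewrite /level minnC maxnC => ? ? ? ? ? ?; apply: wlog; rewrite // eq_sym.
rewrite /level (minn_idPl (ltnW c12)) (maxn_idPr (ltnW c12)).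
have mid := mono c1.+1 c2 c12 (ltnW c2n); have := le2 c2.+1.
case: (leqP j c1) => j1; first by have := mono j c1 j1 (ltn_trans c12 (ltnW c2n)); lia.
case: (leqP j c2) => j2.
  by have := mono j c2 j2 (ltnW c2n); have := mono c1.+1 j j1 jn; lia.
by have := mono c2.+1 j j2 jn; have := le2 j; lia.
Qed.

Lemma mod1_mod n x : mod1 n x = x %[mod n].
Proof. by rewrite /mod1; case: eqP => [->|_]; rewrite ?modnn ?modn_mod. Qed.

Lemma mod1_succ n x : (mod1 n x).+1 = x.+1 %[mod n].
Proof. by rewrite -addn1 -modnDml mod1_mod modnDml addn1. Qed.

Lemma mod_succ_neq n x : 1 < n -> x.+1 != x %[mod n].
Proof. by move=> n1; rewrite -addn1 -{2}[x]addn0 eqn_modDl !modn_small // ltnW. Qed.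

Lemma mod1_range n x : 0 < n -> 1 <= mod1 n x <= n.
Proof. by move=> n0; rewrite /mod1; case: eqP; lia. Qed.

Lemma eq_of_mod n x y : 1 <= x <= n -> 1 <= y <= n -> x = y %[mod n] -> x = y.
Proof.
have red z : 1 <= z <= n -> z %% n = if z == n then 0 else z.
  by case: eqP => [->|ne] zn; rewrite ?modnn // modn_small //; lia.
by move=> xn yn; rewrite !red //; do 2 case: eqP; lia.
Qed.

Lemma mod1_eq n x y : 1 <= y <= n -> x = y %[mod n] -> mod1 n x = y.
Proof.
move=> yn xy; have n0 : 0 < n by lia.
by apply: eq_of_mod yn _; rewrite ?mod1_range ?mod1_mod.
Qed.

(* The second cut entry (h - k - 1) mod n, the entry followed in P by h-1. *)
Definition cut_entry (n k h : nat) : nat := mod1 n (h + n - k.+1).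

Lemma cut_entry_mod n k h : 1 <= h -> k < n -> cut_entry n k h + k.+1 = h %[mod n].
Proof.
move=> h1 kn; rewrite /cut_entry -modnDml mod1_mod modnDml.
have -> : h + n - k.+1 + k.+1 = h + n by lia.
by rewrite modnDr.
Qed.

Section APP.

Variables (n k : nat) (P : seq nat).
Hypothesis n_gt0 : 0 < n.
Hypothesis P_app : is_APP n k P.

Local Notation h := (head 0 P).

Lemma app_perm : perm_eq P (iota 1 n).
Proof. by case: P_app. Qed.

Lemma app_ratio : 1 <= k < n.
Proof. by case: P_app => _ /andP[k1 kn] _; rewrite k1 /=; lia. Qed.

Lemma app_step j : j.+1 < n -> nth 0 P j.+1 = mod1 n (nth 0 P j + k).
Proof. by case: P_app => _ _; apply. Qed.

Lemma app_entry j : j < n -> 1 <= nth 0 P j <= n.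
Proof. exact: (perm_entry app_perm). Qed.

Lemma app_index x : 1 <= x <= n -> index x P < n /\ nth 0 P (index x P) = x.
Proof. exact: (perm_index app_perm). Qed.

Lemma app_index_nth j : j < n -> index (nth 0 P j) P = j.
Proof. exact: (perm_index_nth app_perm). Qed.

Lemma app_head : 1 <= h <= n.
Proof. by rewrite -nth0; apply: app_entry. Qed.

Lemma app_nth_mod i : i < n -> nth 0 P i = h + i * k %[mod n].
Proof.
elim: i => [|i IH] i1; first by rewrite nth0 addn0.
by rewrite app_step // mod1_mod -modnDml IH ?modnDml ?mulSnr ?addnA //; lia.
Qed.

Lemma app_last_mod : nth 0 P n.-1 + k = h %[mod n].
Proof.
rewrite -modnDml app_nth_mod ?prednK // modnDml -addnA -mulSnr prednK //.
by rewrite addnC mulnC modnMDl.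
Qed.

Lemma app_has_next j : j < n -> nth 0 P j + k != h %[mod n] -> j.+1 < n.
Proof.
move=> jn; apply: contraNT; rewrite -leqNgt => nj.
have -> : j = n.-1 by lia.
by rewrite app_last_mod.
Qed.

Lemma app_shift j : j.+1 < n -> nth 0 P j < n ->
  nth 0 P j != n - k -> nth 0 P j != cut_entry n k h ->
  exists2 j', j'.+1 < n & nth 0 P j' = (nth 0 P j).+1 /\ nth 0 P j'.+1 = (nth 0 P j.+1).+1.
Proof.
set a := nth 0 P j => jn an not_cut1 not_cut2.
have [k1 kn] := andP app_ratio; have [h1 hn] := andP app_head.
have a1 : 1 <= a by have := app_entry (ltnW jn); lia.
have [j'n ej'] := app_index (x := a.+1) (ltac:(lia)).
have b_def := app_step jn; rewrite -/a in b_def.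
have bn : nth 0 P j.+1 != n.
  apply: contra not_cut1 => /eqP bn; apply/eqP/(eq_of_mod (n := n)); try lia.
  apply/eqP; rewrite -(eqn_modDr k) subnK; last by lia.
  by rewrite -(mod1_mod n (a + k)) -b_def bn.
have j'next : (index a.+1 P).+1 < n.
  apply: app_has_next => //; rewrite ej'; apply: contra not_cut2 => /eqP hmod.
  apply/eqP/(eq_of_mod (n := n)); [lia | apply: mod1_range; lia |].
  by apply/eqP; rewrite -(eqn_modDr k.+1) cut_entry_mod // addnS -addSn hmod.
exists (index a.+1 P) => //; split => //.
rewrite (app_step j'next) ej'; apply: mod1_eq; first by have := app_entry jn; lia.
by rewrite b_def mod1_succ addSn.
Qed.

End APP.

Definition cut1 (n k : nat) (P : seq nat) : nat := index (n - k) P.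
Definition cut2 (n k : nat) (P : seq nat) : nat := index (cut_entry n k (head 0 P)) P.

Lemma ternary_letter n k P j : is_APP n k P -> j < n ->
  letter (ternary_of n k P) (nth 0 P j) = level (cut1 n k P) (cut2 n k P) j :> nat.
Proof.
move=> P_app jn; have /andP[x1 xn] := app_entry P_app jn.
rewrite /letter /ternary_of /level /cut1 /cut2 /cut_entry nth_mkseq; last by lia.
rewrite prednK //.
set x := nth 0 P j; set c1 := (minn _ _).+1; set c2 := (maxn _ _).+1.
have ix : index x P = j := app_index_nth P_app jn.
have xP : x \in P by rewrite mem_nth ?(perm_size_eq (app_perm P_app)).
have inB : x \notin take c1 P -> (x \in drop c1 (take c2 P)) = (x \in take c2 P).
  move=> notA; rewrite -{2}(cat_take_drop c1 (take c2 P)) mem_cat take_takel ?(negbTE notA) //.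
  by rewrite /c1 /c2 ltnS geq_min leq_maxl.
case: ifP => inA; first by move: inA; rewrite in_take // ix /c1 /=; lia.
rewrite inB ?inA //; move: inA; rewrite !in_take // ix /c1 /c2.
by case: ifP => /=; lia.
Qed.

Lemma ternary_size n k P : size (ternary_of n k P) = n.
Proof. exact: size_mkseq. Qed.

Lemma ternary_sorted n k P : 0 < n -> is_APP n k P ->
  sorted (suffix_lt (ternary_of n k P)) P.
Proof.
move=> n_gt0 P_app; set T := ternary_of n k P.
have permT : perm_eq P (iota 1 (size T)) by rewrite ternary_size (app_perm P_app).
apply: sorted_of_steps => //; rewrite ternary_size => j jn /=.
have lj := ternary_letter P_app (ltnW jn); have lj1 := ternary_letter P_app jn.
move: lj lj1; rewrite /level /cut1 /cut2 -/T => lj lj1.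
set c1 := index (n - k) P in lj lj1; set c2 := index _ P in lj lj1.
case: (ltnP (letter T (nth 0 P j)) (letter T (nth 0 P j.+1))) => [up|flat]; [by left|right].
have eq_letters : letter T (nth 0 P j) = letter T (nth 0 P j.+1) by apply: val_inj => /=; lia.
split=> //; have [a_in_P not_cuts] : j < n /\ j != c1 /\ j != c2 by lia.
have ia := app_index_nth P_app (ltnW jn).
have [a_top|a_lt] := eqVneq (nth 0 P j) n; [by left | right].
apply: (app_shift n_gt0 P_app) => //.
- by have := app_entry P_app a_in_P; lia.
- by apply: contra not_cuts.1 => /eqP a_cut; rewrite /c1 -a_cut ia.
- by apply: contra not_cuts.2 => /eqP a_cut; rewrite /c2 -a_cut ia.
Qed.

Section Cuts.

Variables (n k : nat) (P : seq nat).
Hypothesis n_gt1 : 1 < n.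
Hypothesis P_app : is_APP n k P.
Hypothesis head_ok : head 0 P \notin [:: 1; k.+1; n].

Local Notation h := (head 0 P).
Local Notation q := (cut_entry n k (head 0 P)).

Let n_gt0 : 0 < n := ltnW n_gt1.

Lemma head_range : [/\ 1 < h, h != k.+1 & h < n].
Proof.
have := app_head n_gt0 P_app; move: head_ok; rewrite !inE => /norP[h1 /norP[hk hn]].
by split=> //; lia.
Qed.

Lemma cut1_next : (cut1 n k P).+1 < n /\ nth 0 P (cut1 n k P).+1 = n.
Proof.
have [k1 kn] := andP (app_ratio n_gt0 P_app); have [h1 _ hn] := head_range.
have [c1n e1] := app_index P_app (x := n - k) (ltac:(lia)).
have next : (cut1 n k P).+1 < n.
  apply: (app_has_next n_gt0 P_app) => //; rewrite e1 subnK ?modnn ?modn_small //; lia.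
by rewrite (app_step P_app next) e1 subnK ?/mod1 ?modnn //; lia.
Qed.

Lemma cut2_entry : [/\ q < n, cut2 n k P < n & nth 0 P (cut2 n k P) = q].
Proof.
have [k1 kn] := andP (app_ratio n_gt0 P_app); have [h1 hk hn] := head_range.
have q_range : 1 <= q <= n by apply: mod1_range.
have q_lt : q < n.
  rewrite ltn_neqAle; case/andP: q_range => _ ->; rewrite andbT.
  apply: contra hk => /eqP qn; apply/eqP/(eq_of_mod (n := n)); try lia.
  by rewrite -(cut_entry_mod (ltnW h1) kn) qn modnDl.
by have [] := app_index P_app q_range.
Qed.

Lemma cut2_next : (cut2 n k P).+1 < n /\ nth 0 P (cut2 n k P).+1 = h.-1.
Proof.
have [k1 kn] := andP (app_ratio n_gt0 P_app); have [h1 _ hn] := head_range.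
have [q_lt c2n e2] := cut2_entry; have q_mod := cut_entry_mod (ltnW h1) kn.
have next : (cut2 n k P).+1 < n.
  apply: (app_has_next n_gt0 P_app c2n).
  by rewrite e2 -q_mod addnS eq_sym mod_succ_neq.
split=> //; rewrite (app_step P_app next) e2; apply: mod1_eq; first lia.
by apply/eqP; rewrite -(eqn_modDr 1) !addn1 -addnS q_mod prednK //; lia.
Qed.

Lemma last_entry : nth 0 P n.-1 = q.+1.
Proof.
have [k1 kn] := andP (app_ratio n_gt0 P_app); have [h1 _ _] := head_range.
have [q_lt _ _] := cut2_entry.
apply: (eq_of_mod (n := n)); [by apply: (app_entry P_app); lia | lia |].
apply/eqP; rewrite -(eqn_modDr k) (app_last_mod n_gt0 P_app) addSn -addnS.
by rewrite (cut_entry_mod (ltnW h1) kn).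
Qed.

Lemma cuts_distinct : cut1 n k P != cut2 n k P.
Proof.
have [k1 kn] := andP (app_ratio n_gt0 P_app); have [h1 _ hn] := head_range.
have [_ _ e2] := cut2_entry; have [c1n e1] := app_index P_app (x := n - k) (ltac:(lia)).
apply/eqP => same; have q_cut1 : q = n - k by rewrite -e2 -same e1.
have := cut_entry_mod (ltnW h1) kn; rewrite q_cut1 addnS subnK; last by lia.
by rewrite -[n.+1]addn1 modnDl !modn_small //; lia.
Qed.

End Cuts.

Lemma suffix_array_letters n k P S :
  1 < n -> is_APP n k P -> head 0 P \notin [:: 1; k.+1; n] ->
  size S = n -> is_suffix_array S P ->
  forall j, j < n -> letter S (nth 0 P j) = level (cut1 n k P) (cut2 n k P) j :> nat.
Proof.
move=> n_gt1 P_app head_ok szS [permS sortS].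
have [c1n e1] := cut1_next n_gt1 P_app head_ok.
have [c2n e2] := cut2_next n_gt1 P_app head_ok.
have [_ _ e2q] := cut2_entry n_gt1 P_app head_ok.
have [k1 kn] := andP (app_ratio (ltnW n_gt1) P_app).
have [h1 _ _] := head_range n_gt1 P_app head_ok.
have [_ e1k] := app_index P_app (x := n - k) (ltac:(lia)).
have mono i j : i <= j -> j < n -> letter S (nth 0 P i) <= letter S (nth 0 P j).
  by move=> ij jn; apply: (sorted_letter_mono permS sortS); rewrite ?szS.
have ascent c : c.+1 < n -> ~~ suffix_lt S (nth 0 P c).+1 (nth 0 P c.+1).+1 ->
    letter S (nth 0 P c) < letter S (nth 0 P c.+1).
  move=> cn; apply: contraNT; rewrite -leqNgt => flat.
  apply: (sorted_tail_lt permS sortS); first by rewrite szS.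
  by apply: val_inj; apply/eqP; rewrite eqn_leq flat mono.
apply: (level_shape (f := fun j => nat_of_ord (letter S (nth 0 P j)))) => //.
- exact: cuts_distinct.
- by move=> j; rewrite -ltnS ltn_ord.
- (* the suffix starting at n is a single letter, beaten by nothing longer *)
  apply: ascent c1n _; rewrite e1 /cut1 e1k /suffix_lt -szS suff_past_end.
  by rewrite lex_nil_r.
- (* equality would put the suffix of p_n = q+1 before that of p_1 = h *)
  apply: ascent c2n _; rewrite e2 e2q prednK ?(ltnW h1) //.
  rewrite -(last_entry n_gt1 P_app head_ok) -nth0 /suffix_lt lex_asym //.
  by apply: (sorted_suffix_lt permS sortS); rewrite ?szS; lia.
Qed.

Theorem theorem7 (n k : nat) (P : seq nat) :
  2 <= n ->
  is_APP n k P ->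
  head 0 P \notin [:: 1; k.+1; n] ->
  is_suffix_array (ternary_of n k P) P /\
  (forall S : seq 'I_3, size S = n -> is_suffix_array S P -> S = ternary_of n k P).
Proof.
move=> n_gt1 P_app head_ok.
have permT : perm_eq P (iota 1 (size (ternary_of n k P))).
  by rewrite ternary_size (app_perm P_app).
split; first by split=> //; apply: ternary_sorted P_app; apply: ltnW.
move=> S szS S_sa; apply: (eq_from_letters permT); first by rewrite ternary_size.
move=> j; rewrite ternary_size => jn; apply: val_inj => /=.
by rewrite (suffix_array_letters n_gt1 P_app head_ok szS S_sa jn) (ternary_letter P_app jn).
Qed.
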